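(* Let $V$ be a Hilbert space of functions on a domain $\Omega\subset\mathbb{R}^d$ with a norm $\|\cdot\|$, let $\mathcal{T}_0$ be a (coarse) triangulation of $\Omega$, and for each $T\in\mathcal{T}_0$ let $\|\cdot\|_T$ be a norm on $V|_T$ with $\|v\|_T=\|v|_T\|$ for all $v\in V$. Let $V_0\subset\dots\subset V_L\subset V$ be nested finite element spaces, $u\in V$ the exact solution of a variational problem $a(u,v)=b(v)$ for all $v\in V$, and $u_k\in V_k$ the discrete solutions. Set $e_k:=u-u_k$, $\tilde e_k:=u_L-u_k$ and $\theta_{k,T}:=\|e_k\|_T/\|e_{k-1}\|_T$. Let $0<j<L$ be an integer and $\ell:=L-j$, and suppose there exist $\varepsilon>0$ and constants $\theta_T>0$, $T\in\mathcal{T}_0$, such that $$\theta_T\le\theta_{i,T}\le(1+\varepsilon)\theta_T<1\quad\text{for all }T\in\mathcal{T}_0\text{ and all } i \text{ with } \ell\le i\le L.$$ Define the unscaled local estimates $\eta'_{j,T}:=\|\tilde e_{L-j}\|_T$, the local effectivity indices $\gamma_T:=\eta'_{j,T}/\|e_L\|_T$, $\partial\gamma:=\max_{T\in\mathcal{T}_0}\gamma_T/\min_{T\in\mathcal{T}_0}\gamma_T$, and $$\theta_{\min}:=\min_{T\in\mathcal{T}_0}\theta_T,\qquad \theta_{\max}:=(1+\varepsilon)\max_{T\in\mathcal{T}_0}\theta_T.$$ Then $$\partial\gamma\le\frac{\theta_{\min}^{-j}+1}{\theta_{\max}^{-j}-1}.$$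
   Context: $a:V\times V\to\mathbb{R}$ is a bilinear form and $b:V\to\mathbb{R}$ a linear form; $u_k$ are the exact Galerkin solutions on the spaces $V_k$, which are associated with nested triangulations obtained from $\mathcal{T}_0$ by successive uniform refinement, so every $T\in\mathcal{T}_0$ is a union of fine elements. The quantities $\theta_{k,T}$ are local grid convergence factors and $\eta'_{j,T}$ is a local error indicator for $\|e_L\|_T$. *)

From HB Require Import structures.
From mathcomp Require Import all_boot all_order all_algebra.
From mathcomp Require Import all_classical all_reals all_analysis.
Set Implicit Arguments. Unset Strict Implicit. Unset Printing Implicit Defensive.
Import Order.TTheory GRing.Theory Num.Theory.
Import numFieldNormedType.Exports.
Local Open Scope ring_scope.
Local Open Scope classical_set_scope.

Section Defs.
Variable R : realType.

(* a seminorm on a real vector space: the local norm v |-> ||v|_T|| is a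
   seminorm on V *)
Definition is_seminorm (V : lmodType R) (p : V -> R) : Prop :=
  [/\ forall (r : R) (v : V), p (r *: v) = `|r| * p v
    & forall v w : V, p (v + w) <= p v + p w].

Definition is_subspace (V : lmodType R) (S : set V) : Prop :=
  S 0 /\ forall (r : R) (v w : V), S v -> S w -> S (r *: v + w).

Definition is_linear_form (V : lmodType R) (b : V -> R) : Prop :=
  forall (r : R) (v w : V), b (r *: v + w) = r * b v + b w.

Definition is_bilinear_form (V : lmodType R) (a : V -> V -> R) : Prop :=
  (forall w, is_linear_form (fun v => a v w)) /\
  (forall v, is_linear_form (fun w => a v w)).

(* max / min of f over a nonempty finite type (t0 witnesses nonemptiness;
   the value does not depend on t0) *)
Definition fmax (I : finType) (t0 : I) (f : I -> R) : R :=
  \big[Num.max/f t0]_(t : I) f t.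
Definition fmin (I : finType) (t0 : I) (f : I -> R) : R :=
  \big[Num.min/f t0]_(t : I) f t.

End Defs.

From HB Require Import structures.
From mathcomp Require Import all_boot all_order all_algebra.
From mathcomp Require Import all_classical all_reals all_analysis.
From mathcomp Require Import lra zify.
Import Order.TTheory GRing.Theory Num.Theory.
Import numFieldNormedType.Exports.
Local Open Scope ring_scope.
Local Open Scope classical_set_scope.

(* On every coarse element the local errors ||e_i||_T decay geometrically with
   ratios in [theta_T, (1 + eps) theta_T], so over j steps
   theta_T^j ||e_(L-j)||_T <= ||e_L||_T <= ((1 + eps) theta_T)^j ||e_(L-j)||_T.
   Since u_L - u_(L-j) = e_(L-j) - e_L, the triangle inequality squeezes
   eta'_T between ||e_(L-j)||_T -+ ||e_L||_T, hence every gamma_T lies in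
   [thmax^-j - 1, thmin^-j + 1], and the bound on max/min follows. *)

Section Seminorm.
Context {R : realType} {V : lmodType R} (p : V -> R).
Hypothesis p_seminorm : is_seminorm p.

Lemma seminorm0 : p 0 = 0.
Proof.
by case: p_seminorm => pZ _; rewrite -(scale0r (0 : V)) pZ normr0 mul0r.
Qed.

Lemma seminormN v : p (- v) = p v.
Proof.
by case: p_seminorm => pZ _; rewrite -scaleN1r pZ normrN normr1 mul1r.
Qed.

Lemma seminorm_ge0 v : 0 <= p v.
Proof.
case: p_seminorm => _ pD.
by have := pD v (- v); rewrite subrr seminorm0 seminormN; lra.
Qed.

Lemma seminormB_le v w : p (v - w) <= p v + p w.
Proof. by case: p_seminorm => _ pD; rewrite -[p w]seminormN pD. Qed.

Lemma seminorm_lerB_dist v w : p v - p w <= p (v - w).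
Proof.
by case: p_seminorm => _ pD; have := pD (v - w) w; rewrite subrK; lra.
Qed.

End Seminorm.

Section FiniteExtrema.
Context {R : realType} {I : finType} (t0 : I).
Implicit Types (f : I -> R) (c : R).

Lemma le_fmax f t : f t <= fmax t0 f.
Proof. exact: le_bigmax. Qed.

Lemma fmin_le f t : fmin t0 f <= f t.
Proof. exact: bigmin_le. Qed.

Lemma fmax_le f c : (forall t, f t <= c) -> fmax t0 f <= c.
Proof. by move=> fc; apply: bigmax_le. Qed.

Lemma fmax_lt f c : (forall t, f t < c) -> fmax t0 f < c.
Proof. by move=> fc; apply: bigmax_lt. Qed.

Lemma le_fmin f c : (forall t, c <= f t) -> c <= fmin t0 f.
Proof. by move=> fc; apply: le_bigmin. Qed.

Lemma lt_fmin f c : (forall t, c < f t) -> c < fmin t0 f.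
Proof. by move=> fc; apply: lt_bigmin. Qed.

Lemma fmax_div_fmin_le f (lo hi : R) :
  0 < lo -> (forall t, lo <= f t <= hi) -> fmax t0 f / fmin t0 f <= hi / lo.
Proof.
move=> lo_gt0 f_bnd.
have lo_le_min : lo <= fmin t0 f by apply: le_fmin => t; case/andP: (f_bnd t).
have max_le_hi : fmax t0 f <= hi by apply: fmax_le => t; case/andP: (f_bnd t).
have max_ge0 : 0 <= fmax t0 f.
  by apply: le_trans (le_fmax f t0); case/andP: (f_bnd t0) => lo_le _; lra.
rewrite ler_pdivrMr ?(lt_le_trans lo_gt0) // mulrAC ler_pdivlMr //.
by apply: ler_pM => //; apply: ltW.
Qed.

End FiniteExtrema.

Section Geometric.
Context {R : realFieldType} (f : nat -> R) (c : R) (m : nat).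
Hypothesis c_ge0 : 0 <= c.

Lemma geometric_growth_ub n :
  (forall i, (m < i <= m + n)%N -> f i <= c * f i.-1) ->
  f (m + n)%N <= c ^+ n * f m.
Proof.
elim: n => [|n IHn] f_step; first by rewrite addn0 expr0 mul1r.
rewrite addnS exprS -mulrA; apply: le_trans (f_step (m + n).+1 _) _; first lia.
by apply: ler_wpM2l => //; apply: IHn => i bnd_i; apply: f_step; lia.
Qed.

Lemma geometric_growth_lb n :
  (forall i, (m < i <= m + n)%N -> c * f i.-1 <= f i) ->
  c ^+ n * f m <= f (m + n)%N.
Proof.
elim: n => [|n IHn] f_step; first by rewrite addn0 expr0 mul1r.
rewrite addnS exprS -mulrA; apply: le_trans _ (f_step (m + n).+1 _); last lia.
by apply: ler_wpM2l => //; apply: IHn => i bnd_i; apply: f_step; lia.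
Qed.

End Geometric.

Lemma lef_pVXn2r {R : realFieldType} (x y : R) n :
  0 < x -> x <= y -> y ^- n <= x ^- n.
Proof.
move=> x_gt0 le_xy; have y_gt0 := lt_le_trans x_gt0 le_xy.
rewrite lef_pV2 ?posrE ?exprn_gt0 //.
by apply: lerXn2r => //; rewrite nnegrE ltW.
Qed.

Lemma effectivity_bounds {R : realFieldType} (c1 c2 x0 xn eta : R) n :
  0 < c1 -> 0 < c2 -> 0 < xn ->
  c1 ^+ n * x0 <= xn -> xn <= c2 ^+ n * x0 ->
  x0 - xn <= eta <= x0 + xn ->
  c2 ^- n - 1 <= eta / xn <= c1 ^- n + 1.
Proof.
move=> c1_gt0 c2_gt0 xn_gt0 lb ub /andP[eta_lb eta_ub].
have x0_lb : c2 ^- n * xn <= x0.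
  by rewrite mulrC ler_pdivrMr ?exprn_gt0 // mulrC.
have x0_ub : x0 <= c1 ^- n * xn.
  by rewrite mulrC ler_pdivlMr ?exprn_gt0 // mulrC.
by rewrite ler_pdivlMr // ler_pdivrMr // mulrBl mulrDl !mul1r; apply/andP; lra.
Qed.

Lemma local_effectivity {R : realType} {V : lmodType R} (p : V -> R)
    (e : nat -> V) (m n : nat) (c1 c2 : R) :
  is_seminorm p -> 0 < c1 ->
  (forall i, (m <= i <= m + n)%N -> c1 <= p (e i) / p (e i.-1) <= c2) ->
  c2 ^- n - 1 <= p (e m - e (m + n)%N) / p (e (m + n)%N) <= c1 ^- n + 1.
Proof.
move=> p_seminorm c1_gt0 ratio.
have err_gt0 i : (m <= i <= m + n)%N -> 0 < p (e i).
  move=> /ratio /andP[c1_le _]; rewrite lt_neqAle seminorm_ge0 // andbT.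
  by apply/eqP => pe0; move: c1_le; rewrite -pe0 mul0r; lra.
have c2_gt0 : 0 < c2.
  by case/andP: (ratio m (ltac:(lia))) => c1_le le_c2; lra.
have step i : (m < i <= m + n)%N ->
    c1 * p (e i.-1) <= p (e i) /\ p (e i) <= c2 * p (e i.-1).
  move=> bnd_i; have prev_gt0 : 0 < p (e i.-1) by apply: err_gt0; lia.
  have /andP[c1_le le_c2] := ratio i (ltac:(lia)).
  by split; [rewrite -ler_pdivlMr | rewrite -ler_pdivrMr].
apply: (@effectivity_bounds _ c1 c2 (p (e m)) _ _ n c1_gt0 c2_gt0).
- by apply: err_gt0; lia.
- apply: (geometric_growth_lb (fun k => p (e k)) c1 m (ltW c1_gt0)).
  by move=> i /step[].
- apply: (geometric_growth_ub (fun k => p (e k)) c2 m (ltW c2_gt0)).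
  by move=> i /step[].
- by rewrite seminorm_lerB_dist // seminormB_le.
Qed.

Theorem corollary2 (R : realType) (V : completeNormedModType R)
  (Tri : finType) (T0 : Tri) (nT : Tri -> V -> R)
  (a : V -> V -> R) (b : V -> R) (Vs : nat -> set V)
  (u : V) (uk : nat -> V) (L j : nat) (eps : R) (thT : Tri -> R) :
  (forall T, is_seminorm (nT T)) ->
  is_bilinear_form a -> is_linear_form b ->
  (forall k, (k <= L)%N -> is_subspace (Vs k)) ->
  (forall k, (k < L)%N -> Vs k `<=` Vs k.+1) ->
  (forall v, a u v = b v) ->
  (forall k, (k <= L)%N -> Vs k (uk k) /\ forall v, Vs k v -> a (uk k) v = b v) ->
  (0 < j)%N -> (j < L)%N ->
  0 < eps -> (forall T, 0 < thT T) ->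
  (let e := fun k => u - uk k in
   let theta := fun k T => nT T (e k) / nT T (e k.-1) in
   forall T i, (L - j <= i)%N -> (i <= L)%N ->
     thT T <= theta i T /\ theta i T <= (1 + eps) * thT T /\
     (1 + eps) * thT T < 1) ->
  let e := fun k => u - uk k in
  let eta' := fun T => nT T (uk L - uk (L - j)%N) in
  let gamma := fun T => eta' T / nT T (e L) in
  let dgamma := fmax T0 gamma / fmin T0 gamma in
  let thmin := fmin T0 thT in
  let thmax := (1 + eps) * fmax T0 thT in
  dgamma <= (thmin ^- j + 1) / (thmax ^- j - 1).
Proof.
move=> nT_seminorm _ _ _ _ _ _ j_gt0 lt_jL eps_gt0 thT_gt0 theta_bnd /=.
set thmin := fmin T0 thT; set thmax := (1 + eps) * fmax T0 thT.
have thmin_gt0 : 0 < thmin by apply: lt_fmin.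
have eps1_gt0 : 0 < 1 + eps by lra.
have thmax_gt0 : 0 < thmax.
  by rewrite mulr_gt0 // (lt_le_trans (thT_gt0 T0) (le_fmax T0 thT T0)).
have thmax_lt1 : thmax < 1.
  rewrite /thmax mulrC -ltr_pdivlMr //; apply: fmax_lt => T.
  rewrite ltr_pdivlMr // mulrC.
  by have [_ []] := theta_bnd T L (leq_subr _ _) (leqnn _).
apply: (fmax_div_fmin_le T0) => [|T].
  rewrite subr_gt0 (invf_gt1 (exprn_gt0 j thmax_gt0)).
  by rewrite (exprn_ilt1 _ (ltW thmax_gt0) thmax_lt1) -lt0n.
have ratio i : (L - j <= i <= L - j + j)%N ->
    thT T <= nT T (u - uk i) / nT T (u - uk i.-1) <= (1 + eps) * thT T.
  rewrite (subnK (ltnW lt_jL)) => /andP[lo_i i_hi].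
  by have [-> [-> _]] := theta_bnd T i lo_i i_hi.
have := @local_effectivity _ _ (nT T) (fun k => u - uk k) (L - j) j _ _
  (nT_seminorm T) (thT_gt0 T) ratio.
have diff_err : uk L - uk (L - j)%N = (u - uk (L - j)%N) - (u - uk L).
  by rewrite opprB [RHS]addrC addrA subrK.
rewrite (subnK (ltnW lt_jL)) -diff_err => /andP[lb ub]; apply/andP; split.
  apply: le_trans lb; rewrite lerD2r lef_pVXn2r ?mulr_gt0 //.
  by rewrite ler_wpM2l ?(ltW eps1_gt0) ?le_fmax.
by apply: le_trans ub _; rewrite lerD2r lef_pVXn2r // fmin_le.
Qed.
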